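(* Let $0\le t_d\le t_f$ be integers and let $f:\mathbb{F}_q^k\to\mathrm{Im}(f)$ be a locally $(2t_f,\lambda)$-bounded function such that there is a total order $\prec$ on $\mathrm{Im}(f)$ for which every set $B_f(u,2t_f)$, $u\in\mathbb{F}_q^k$, is a contiguous block (an interval) with respect to $\prec$. Suppose there exists a systematic $[n,k,2t_d+1]$ linear code over $\mathbb{F}_q$. Then $$r_f(k,t_d,t_f)\le n-k+N(\lambda,2(t_f-t_d)).$$ In particular, for $q=2$ and $\lambda=4$, $r_f(k,t_d,t_f)\le n-k+3(t_f-t_d)$.
   Context: $d(\cdot,\cdot)$ is Hamming distance. $B_f(u,\rho)=\{f(u'):u'\in\mathbb{F}_q^k,\ d(u,u')\le\rho\}$; $f$ is locally $(\rho,\lambda)$-bounded if $|B_f(u,\rho)|\le\lambda$ for all $u$. $N(\lambda,d)$ is the minimum length of a $q$-ary code with $\lambda$ codewords and minimum distance at least $d$ (with $N(\lambda,0)=0$). An $(f,t_d,t_f)$-FCC with redundancy $r$ is a systematic encoding $u\mapsto(u,p_u)\in\mathbb{F}_q^{k+r}$ whose images are at distance $\ge 2t_d+1$ for distinct messages and $\ge 2t_f+1$ for messages with different $f$-values; $r_f(k,t_d,t_f)$ is the minimum such $r$. *)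

From HB Require Import structures.
From mathcomp Require Import all_boot all_order all_algebra all_field.
From Stdlib Require Import ClassicalEpsilon.
Set Implicit Arguments. Unset Strict Implicit. Unset Printing Implicit Defensive.
Import GRing.Theory.
Local Open Scope ring_scope.

(* Classical minimum of a predicate on nat (0 if the predicate is never true). *)
Definition cmin (P : pred nat) : nat :=
  match excluded_middle_informative (exists n, P n) with
  | left H => ex_minn H
  | right _ => 0%N
  end.

Definition hdist (F : finFieldType) (m : nat) (x y : 'rV[F]_m) : nat :=
  #|[set i : 'I_m | x 0 i != y 0 i]|.

Definition fball (F : finFieldType) (k : nat) (T : finType)
    (f : 'rV[F]_k -> T) (u : 'rV[F]_k) (rho : nat) : {set T} :=
  [set f u' | u' in [set u' : 'rV[F]_k | (hdist u u' <= rho)%N]].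

Definition locally_bounded (F : finFieldType) (k : nat) (T : finType)
    (f : 'rV[F]_k -> T) (rho lam : nat) : Prop :=
  forall u, (#|fball f u rho| <= lam)%N.

Definition fimage (F : finFieldType) (k : nat) (T : finType)
    (f : 'rV[F]_k -> T) : {set T} := [set f u | u in [set: 'rV[F]_k]].

Definition total_order_on (T : finType) (S : {set T}) (le : rel T) : Prop :=
  {in S &, forall a b, le a b -> le b a -> a = b} /\
  {in S & &, forall a b c, le a b -> le b c -> le a c} /\
  {in S &, forall a b, le a b || le b a}.

Definition interval_in (T : finType) (S : {set T}) (le : rel T) (B : {set T}) :
  Prop :=
  forall a b c, a \in B -> b \in B -> c \in S -> le a c -> le c b -> c \in B.

Definition has_code (F : finFieldType) (lam d m : nat) : bool :=
  [exists C : {set 'rV[F]_m}, (#|C| == lam) &&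
     [forall x in C, forall y in C, (x != y) ==> (d <= hdist x y)%N]].

(* N(lam, d), with the convention N(lam, 0) = 0 *)
Definition Ncode (F : finFieldType) (lam d : nat) : nat :=
  if d == 0%N then 0%N else cmin (has_code F lam d).

Definition has_fcc (F : finFieldType) (k : nat) (T : finType)
    (f : 'rV[F]_k -> T) (td tf r : nat) : bool :=
  [exists p : {ffun 'rV[F]_k -> 'rV[F]_r},
     [forall u, forall v,
        ((u != v) ==> (2 * td + 1 <= hdist (row_mx u (p u)) (row_mx v (p v)))%N)
        && ((f u != f v) ==>
              (2 * tf + 1 <= hdist (row_mx u (p u)) (row_mx v (p v)))%N)]].

Definition r_f (F : finFieldType) (k : nat) (T : finType)
    (f : 'rV[F]_k -> T) (td tf : nat) : nat :=
  cmin (has_fcc f td tf).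

(* existence of a systematic [n, k, >= d] linear code over F: generator
   matrix [I_k | P] with P : 'M_(k, n-k), k <= n *)
Definition has_systematic_linear_code (F : finFieldType) (n k d : nat) : Prop :=
  (k <= n)%N /\
  exists P : 'M[F]_(k, n - k),
    forall u v : 'rV[F]_k, u != v ->
      (d <= hdist (row_mx u (u *m P)) (row_mx v (v *m P)))%N.

(** Encode [u] as [(u, u P, c_(rank (f u) mod lam))], where [u |-> (u, u P)] is the
    systematic linear code and [c] is a code with [lam] words at mutual distance
    [2(tf - td)].  If [f u <> f v] and [d(u, v) <= 2 tf], both values lie in the
    ball [B_f(u, 2 tf)], an interval of at most [lam] values of the order, so
    their ranks differ by less than [lam] and select distinct words of [c]; this
    adds the missing [2(tf - td)] to the distance [2 td + 1] of the linear part.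
    If [d(u, v) > 2 tf] the systematic part alone is far enough. *)
From mathcomp Require Import all_boot all_order all_algebra all_field.
From mathcomp Require Import zify.
From Stdlib Require Import ClassicalEpsilon.
Set Implicit Arguments. Unset Strict Implicit. Unset Printing Implicit Defensive.
Import GRing.Theory.

Lemma cmin_le (P : pred nat) r : P r -> (cmin P <= r)%N.
Proof.
move=> Pr; rewrite /cmin; case: excluded_middle_informative => [H|[]]; last by exists r.
by case: ex_minnP => m _; apply.
Qed.

Lemma cminP (P : pred nat) : (exists r, P r) -> P (cmin P).
Proof.
by move=> ex; rewrite /cmin; case: excluded_middle_informative => [H|//]; case: ex_minnP.
Qed.

Section HammingDistance.

Variable F : finFieldType.

Lemma hdistE m (x y : 'rV[F]_m) : hdist x y = (\sum_(i < m) (x 0%R i != y 0%R i))%N.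
Proof.
rewrite /hdist -sum1_card big_mkcond /=; apply: eq_bigr => i _.
by rewrite inE; case: (x 0%R i != y 0%R i).
Qed.

Lemma hdistxx m (x : 'rV[F]_m) : hdist x x = 0%N.
Proof. by rewrite hdistE big1 // => i _; rewrite eqxx. Qed.

Lemma hdist_row_mx m1 m2 (a a' : 'rV[F]_m1) (b b' : 'rV[F]_m2) :
  hdist (row_mx a b) (row_mx a' b') = (hdist a a' + hdist b b')%N.
Proof.
rewrite !hdistE big_split_ord /=; congr (_ + _)%N; apply: eq_bigr => i _;
by rewrite ?row_mxEl ?row_mxEr.
Qed.

Fixpoint repeat_row m (x : 'rV[F]_m) e : 'rV[F]_(e * m) :=
  match e return 'rV[F]_(e * m) with
  | 0 => 0
  | e'.+1 => row_mx x (repeat_row x e')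
  end.

Lemma hdist_repeat_row m (x y : 'rV[F]_m) e :
  hdist (repeat_row x e) (repeat_row y e) = (e * hdist x y)%N.
Proof.
by elim: e => [|e IH] /=; rewrite ?hdistxx // hdist_row_mx IH mulSn.
Qed.

End HammingDistance.

Section CodeFamilies.

Variable F : finFieldType.

(* Codewords are indexed by [nat] so that they can be selected by a residue
   [i %% lam] without carrying a bound proof. *)
Definition code_family (lam d m : nat) (c : nat -> 'rV[F]_m) : Prop :=
  forall i j, (i < lam)%N -> (j < lam)%N -> i != j -> (d <= hdist (c i) (c j))%N.

Lemma code_family_repeat lam d m (c : nat -> 'rV[F]_m) e :
  code_family lam d c -> code_family lam (e * d) (fun i => repeat_row (c i) e).
Proof. by move=> cd i j ilam jlam ij; rewrite hdist_repeat_row leq_mul2l cd ?orbT. Qed.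

Lemma has_code_family lam d m (c : nat -> 'rV[F]_m) :
  (0 < d)%N -> code_family lam d c -> has_code F lam d m.
Proof.
move=> d_gt0 cd; apply/existsP; exists [set c (val i) | i : 'I_lam].
have c_inj : injective (fun i : 'I_lam => c (val i)).
  move=> i j cij; apply/eqP; apply: contraT => ij.
  by have := cd _ _ (ltn_ord i) (ltn_ord j) ij; rewrite cij hdistxx leqNgt d_gt0.
rewrite card_imset // card_ord eqxx /=.
apply/forall_inP => _ /imsetP [i _ ->]; apply/forall_inP => _ /imsetP [j _ ->].
by apply/implyP => cij; apply: cd; rewrite ?ltn_ord //; apply: contraNneq cij => /val_inj ->.
Qed.

Lemma code_familyP lam d m : has_code F lam d m ->
  exists c : nat -> 'rV[F]_m, code_family lam d c.
Proof.
case/existsP => C /andP [/eqP cardC /forall_inP dC].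
have size_C : size (enum C) = lam by rewrite -cardE.
have in_C i : (i < lam)%N -> nth 0%R (enum C) i \in C.
  by move=> ilam; rewrite -mem_enum mem_nth // size_C.
exists (nth 0%R (enum C)) => i j ilam jlam ij.
move/forall_inP: (dC _ (in_C _ ilam)) => /(_ _ (in_C _ jlam)) /implyP; apply.
by rewrite nth_uniq ?size_C ?enum_uniq.
Qed.

Lemma Ncode_le lam d m : has_code F lam d m -> (Ncode F lam d <= m)%N.
Proof. by rewrite /Ncode; case: eqP => // _; apply: cmin_le. Qed.

Definition unit_row (m i : nat) : 'rV[F]_m := \row_(j < m) (j == i :> nat)%:R%R.

Lemma code_family_unit_row lam : code_family lam 2 (unit_row lam).
Proof.
move=> i j ilam jlam ij; pose i' := Ordinal ilam; pose j' := Ordinal jlam.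
have -> : 2%N = #|[set i'; j']| by rewrite cards2; case: eqP => // -[] /eqP; rewrite (negbTE ij).
apply/subset_leq_card/subsetP => l; rewrite !inE !mxE.
have ji : j != i by rewrite eq_sym.
by case/orP => /eqP -> /=; rewrite eqxx ?(negbTE ij) ?(negbTE ji) ?oner_neq0 // eq_sym oner_neq0.
Qed.

Lemma has_code_Ncode lam d : (0 < d)%N -> has_code F lam d (Ncode F lam d).
Proof.
move=> d_gt0; rewrite /Ncode gtn_eqF //; apply: cminP.
exists (d * lam)%N; apply: (has_code_family d_gt0).
have := @code_family_repeat _ _ _ _ d (@code_family_unit_row lam).
by move=> cd i j ilam jlam ij; apply: leq_trans (cd i j ilam jlam ij); rewrite leq_pmulr.
Qed.

(* The even-weight code [000, 110, 101, 011].  It lives over any field. *)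
Definition even_weight3 (i : nat) : 'rV[F]_3 :=
  \row_(j < 3) ((i != 0%N) && (j != i.-1 :> nat))%:R%R.

Lemma code_family_even_weight3 : code_family 4 2 even_weight3.
Proof.
move=> i j ilam jlam ij; rewrite hdistE !big_ord_recl big_ord0 !mxE /=.
case: i ilam ij => [|[|[|[|i]]]] // _; case: j jlam => [|[|[|[|j]]]] // _ _.
all: by rewrite /bump /= ?mulr1n ?mulr0n ?eqxx ?oner_neq0 ?(eq_sym 0%R 1%R) ?oner_neq0.
Qed.

End CodeFamilies.

Lemma neq_modn_lt x y l : (x < y < x + l)%N -> x %% l != y %% l.
Proof.
case/andP => xy yl; rewrite -(subnKC (ltnW xy)) -{1}[x]addn0 eqn_modDl mod0n.
by rewrite modn_small; lia.
Qed.

Section Rank.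

Variables (T : finType) (S : {set T}) (le : rel T).
Hypothesis le_total : total_order_on S le.

Definition rank_in (a : T) : nat := #|[set b in S | le b a]|.

Lemma le_refl_in a : a \in S -> le a a.
Proof. by case: le_total => _ [_ tot] aS; have := tot a a aS aS; rewrite orbb. Qed.

Lemma rank_in_lt a b : a \in S -> b \in S -> a != b -> le a b ->
  (rank_in a < rank_in b)%N.
Proof.
case: le_total => [anti [trans _]] aS bS ab leab.
apply/proper_card/properP; split.
  by apply/subsetP => c; rewrite !inE => /andP [cS ca]; rewrite cS (trans c a b).
exists b; first by rewrite inE bS le_refl_in.
by rewrite inE bS /=; apply: contra ab => leba; rewrite (anti a b).
Qed.

Lemma rank_in_ltD (B : {set T}) a b : B \subset S -> interval_in S le B ->
  a \in B -> b \in B -> le a b -> (rank_in b < rank_in a + #|B|)%N.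
Proof.
case: le_total => [_ [_ tot]] /subsetP BS intB aB bB leab.
have sub : [set c in S | le c b] \subset [set c in S | le c a] :|: B :\ a.
  apply/subsetP => c; rewrite !inE => /andP [cS lecb]; rewrite cS /=.
  have [//|leca] := boolP (le c a).
  have leac : le a c by have := tot a c (BS a aB) cS; rewrite (negbTE leca) orbF.
  by rewrite (intB a b c) // andbT; apply: contraNneq leca => ->; apply: le_refl_in; apply: BS.
have := subset_leq_card sub; have [+ _] := leq_card_setU [set c in S | le c a] (B :\ a).
by rewrite /rank_in (cardsD1 a B) aB; lia.
Qed.

Lemma rank_in_modn_neq (B : {set T}) lam a b : B \subset S -> interval_in S le B ->
  (#|B| <= lam)%N -> a \in B -> b \in B -> a != b ->
  rank_in a %% lam != rank_in b %% lam.
Proof.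
move=> BS intB Blam; have /subsetP BS' := BS.
wlog leab : a b / le a b => [hwlog aB bB ab|aB bB ab].
  case: le_total => _ [_ tot].
  have /orP [leab|leba] := tot a b (BS' a aB) (BS' b bB); first exact: hwlog.
  by rewrite eq_sym; apply: hwlog; rewrite // eq_sym.
apply: neq_modn_lt.
rewrite rank_in_lt ?BS' //=; apply: leq_trans (rank_in_ltD BS intB aB bB leab) _.
by rewrite leq_add2l.
Qed.

End Rank.

Section Construction.

Variables (F : finFieldType) (k : nat) (T : finType) (f : 'rV[F]_k -> T) (le : rel T).

Lemma fball_sub_fimage u rho : fball f u rho \subset fimage f.
Proof. by apply/subsetP => _ /imsetP [v _ ->]; apply/imsetP; exists v. Qed.

Lemma mem_fball u v rho : (hdist u v <= rho)%N -> f v \in fball f u rho.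
Proof. by move=> duv; apply/imsetP; exists v; rewrite ?inE. Qed.

Lemma fcc_from_codes (td tf lam n m : nat) (P : 'M[F]_(k, n - k)) (c : nat -> 'rV[F]_m) :
  (td <= tf)%N ->
  locally_bounded f (2 * tf) lam ->
  total_order_on (fimage f) le ->
  (forall u, interval_in (fimage f) le (fball f u (2 * tf))) ->
  (forall u v : 'rV[F]_k, u != v ->
      (2 * td + 1 <= hdist (row_mx u (u *m P)) (row_mx v (v *m P)))%N) ->
  code_family lam (2 * (tf - td)) c ->
  has_fcc f td tf (n - k + m).
Proof.
move=> tdf fbounded le_total fint lin cd.
pose rk u := rank_in (fimage f) le (f u) %% lam.
apply/existsP; exists [ffun u => row_mx (u *m P) (c (rk u))].
apply/'forall_forallP => u v; rewrite !ffunE !hdist_row_mx addnA.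
have lam_gt0 : (0 < lam)%N.
  by apply: leq_trans (fbounded u); rewrite card_gt0; apply/set0Pn; exists (f u);
    rewrite mem_fball ?hdistxx.
have [-> | uv] := eqVneq u v; first by rewrite !eqxx.
have lin_uv := lin u v uv; rewrite hdist_row_mx in lin_uv.
rewrite (leq_trans lin_uv (leq_addr _ _)) /=; apply/implyP => fuv.
have [duv | duv] := leqP (hdist u v) (2 * tf); last first.
  by rewrite addn1 (leq_trans duv) // -addnA leq_addr.
have rk_uv : rk u != rk v.
  apply: (rank_in_modn_neq le_total (fball_sub_fimage u _) (fint u) (fbounded u));
    by rewrite ?mem_fball ?hdistxx.
have dc := cd _ _ (ltn_pmod _ lam_gt0) (ltn_pmod _ lam_gt0) rk_uv.
by apply: leq_trans (leq_add lin_uv dc); rewrite addnAC -mulnDr subnKC.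
Qed.

End Construction.

Theorem theorem10 (F : finFieldType) (k n td tf lam : nat) (T : finType)
    (f : 'rV[F]_k -> T) (le : rel T) :
  (td <= tf)%N ->
  locally_bounded f (2 * tf) lam ->
  total_order_on (fimage f) le ->
  (forall u, interval_in (fimage f) le (fball f u (2 * tf))) ->
  has_systematic_linear_code F n k (2 * td + 1) ->
  (r_f f td tf <= n - k + Ncode F lam (2 * (tf - td)))%N /\
  (#|F| = 2%N -> lam = 4%N -> (r_f f td tf <= n - k + 3 * (tf - td))%N).
Proof.
move=> tdf fbounded le_total fint [_ [P lin]].
have r_f_le m (c : nat -> 'rV[F]_m) : code_family lam (2 * (tf - td)) c ->
    (r_f f td tf <= n - k + m)%N.
  by move=> cd; exact: cmin_le (fcc_from_codes tdf fbounded le_total fint lin cd).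
have r_f_Ncode : (r_f f td tf <= n - k + Ncode F lam (2 * (tf - td)))%N.
  have [d0 | d_gt0] := posnP (2 * (tf - td)).
    by rewrite /Ncode d0 /=; apply: (r_f_le 0%N (fun=> 0%R)) => i j; rewrite d0.
  by have [c cd] := code_familyP (has_code_Ncode F lam d_gt0); apply: r_f_le cd.
split=> // _ lam4; apply: leq_trans r_f_Ncode _; rewrite leq_add2l lam4.
have [d0 | d_gt0] := posnP (2 * (tf - td)); first by rewrite /Ncode d0.
have cd : code_family 4 (2 * (tf - td)) (fun i => repeat_row (even_weight3 F i) (tf - td)).
  by rewrite [(2 * _)%N]mulnC; apply/code_family_repeat/code_family_even_weight3.
by rewrite [(3 * _)%N]mulnC; apply/Ncode_le/(has_code_family d_gt0 cd).
Qed.
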